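(* Let $\Omega\subseteq\mathbb{R}^2$ be a compact domain, $r_d>0$, $a_I>0$, $a_h>0$, $a_v>0$, and let $c_r>0$ be a collision radius. Consider $N$ vehicles with dynamics $\dot p_i=v_i$, $\dot v_i=u_i$ and control law (applied without thresholding) $$u_i=-\sum_{j\neq i}\nabla_i V_I(p_{ij})-\nabla_i V_h(p_i)-a_v v_i.$$ Let $$\Phi=\frac12\sum_{i=1}^N\Bigl(\dot p_i\cdot\dot p_i+\sum_{j\ne i}V_I(p_{ij})+2V_h(p_i)\Bigr).$$ Suppose that for some nonnegative integer $k$, $$\Phi(0)<(k+1)\int_{r_d}^{c_r}f_I(s)\,ds.$$ Then for all $t\ge0$, at most $k$ distinct pairs of vehicles are unsafe at time $t$ (i.e., satisfy $\|p_i(t)-p_j(t)\|\le c_r$); in particular $k=0$ guarantees that no pair is ever unsafe.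
   Context: $p_{ij}:=p_i-p_j$; the signed distance of $x$ from $\partial\Omega$ is positive outside $\Omega$, negative inside. $f_I(r)=a_I(r-r_d)$ for $0\le r<r_d$ and $f_I(r)=0$ for $r\ge r_d$. $V_I(x)=\frac{a_I}{2}(\|x\|-r_d)^2$ for $\|x\|<r_d$, $V_I(x)=0$ otherwise; $V_h(x)=0$ if the signed distance of $x$ to $\partial\Omega$ is $\le -\frac{r_d}{2}$ and $V_h(x)=\frac{a_h}{2}(\text{signed distance}+\frac{r_d}{2})^2$ otherwise. A pair $(i,j)$ is unsafe at time $t$ if $\|p_i(t)-p_j(t)\|\le c_r$. *)

(* Points of the plane are row vectors 'rV[R]_2 (the product topology of
   'rV[R]_2 is the Euclidean topology; the Euclidean norm is defined below). *)
From HB Require Import structures.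
From mathcomp Require Import all_boot all_order all_algebra.
From mathcomp Require Import all_classical all_reals all_analysis.
Set Implicit Arguments. Unset Strict Implicit. Unset Printing Implicit Defensive.
Import Order.TTheory GRing.Theory Num.Theory.
Import numFieldNormedType.Exports.
Local Open Scope classical_set_scope.
Local Open Scope ring_scope.

Section Defs.
Variable R : realType.

Definition dotv (x y : 'rV[R]_2) : R := \sum_(k < 2) x 0 k * y 0 k.
Definition enorm (x : 'rV[R]_2) : R := Num.sqrt (dotv x x).

Definition grad (f : 'rV[R]_2 -> R) (x : 'rV[R]_2) : 'rV[R]_2 :=
  \row_(k < 2) ('D_(delta_mx 0 k) f x).

Definition bdry (O : set 'rV[R]_2) : set 'rV[R]_2 := closure O `\` interior O.

Definition dist_set (A : set 'rV[R]_2) (x : 'rV[R]_2) : R :=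
  inf [set enorm (x - y) | y in A].

Definition sdist (O : set 'rV[R]_2) (x : 'rV[R]_2) : R :=
  if `[< O x >] then - dist_set (bdry O) x else dist_set (bdry O) x.

Definition compact_domain (O : set 'rV[R]_2) : Prop :=
  compact O /\ exists D : set 'rV[R]_2,
    [/\ open D, connected D, D !=set0 & O = closure D].

Definition fI (aI rd : R) (r : R) : R :=
  if (0 <= r) && (r < rd) then aI * (r - rd) else 0.
Definition VI (aI rd : R) (x : 'rV[R]_2) : R :=
  if enorm x < rd then aI / 2 * (enorm x - rd) ^+ 2 else 0.
Definition Vh (O : set 'rV[R]_2) (ah rd : R) (x : 'rV[R]_2) : R :=
  if sdist O x <= - (rd / 2) then 0 else ah / 2 * (sdist O x + rd / 2) ^+ 2.

Definition oint (a b : R) (f : R -> R) : R :=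
  if a <= b then (\int[lebesgue_measure]_(s in `[a, b]) f s)
  else - (\int[lebesgue_measure]_(s in `[b, a]) f s).

(* the energy Phi at time t, with vdot p_i = v_i *)
Definition Phi (N : nat) (O : set 'rV[R]_2) (aI ah rd : R)
  (p v : 'I_N -> R -> 'rV[R]_2) (t : R) : R :=
  2^-1 * \sum_(i < N) (dotv (v i t) (v i t)
     + \sum_(j < N | j != i) VI aI rd (p i t - p j t)
     + 2 * Vh O ah rd (p i t)).

Definition n_unsafe (N : nat) (cr : R) (p : 'I_N -> R -> 'rV[R]_2) (t : R) : nat :=
  #|[set ij : 'I_N * 'I_N | (ij.1 < ij.2)%N && (enorm (p ij.1 t - p ij.2 t) <= cr)]|.

End Defs.

(* The energy [Phi] is a Lyapunov function: along the closed-loop dynamics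
   [Phi' = - a_v * sum_i |v_i|^2 <= 0], because [V_I] is even, so that
   [grad V_I (p_ji) = - grad V_I (p_ij)] and the interaction terms of the
   derivative cancel in pairs.  On the other hand [Phi >= sum_(i<j) V_I (p_ij)],
   and an unsafe pair has [V_I (p_ij) >= int_(r_d)^(c_r) f_I =: c].  Hence
   [n c <= Phi t <= Phi 0 < (k + 1) c] for [n] unsafe pairs, so [n <= k]
   (if [c <= 0] the hypothesis on [Phi 0] already contradicts [Phi >= 0]). *)
From HB Require Import structures.
From mathcomp Require Import all_boot all_order all_algebra.
From mathcomp Require Import all_classical all_reals all_analysis.
From mathcomp Require Import ring lra.
Import Order.TTheory GRing.Theory Num.Theory.
Import numFieldNormedType.Exports.
Local Open Scope classical_set_scope.
Local Open Scope ring_scope.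

Section derive_lemmas.
Context {R : realFieldType} {V W : normedModType R}.

Lemma is_derive_big {I : Type} (r : seq I) (P : pred I) (h : I -> V -> W)
    (dh : I -> W) (x v : V) :
  (forall i, P i -> is_derive x v (h i) (dh i)) ->
  is_derive x v (fun y => \sum_(i <- r | P i) h i y) (\sum_(i <- r | P i) dh i).
Proof.
move=> hd; elim: r => [|i r IH].
  rewrite big_nil (_ : (fun y => _) = cst 0); first exact: is_derive_cst.
  by apply/funext => y; rewrite big_nil.
rewrite big_cons (_ : (fun y => _) =
  (fun y => (if P i then h i y else 0) + \sum_(j <- r | P j) h j y)); last first.
  by apply/funext => y; rewrite big_cons; case: (P i); rewrite ?add0r.
case: (boolP (P i)) => Pi; first exact: (is_deriveD (hd i Pi) IH).
by rewrite -[X in is_derive _ _ _ X]add0r; exact: (is_deriveD (is_derive_cst 0 x v) IH).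
Qed.

Lemma is_derive_mx_coef m n (M : V -> 'M[R]_(m, n)) (x v : V) dM i j :
  is_derive x v M dM -> is_derive x v (fun y => M y i j) (dM i j).
Proof.
move=> [dMx <-]; have dMij := (derivable_mxP M x v).1 dMx i j.
by apply: DeriveDef => //; rewrite derive_mx // mxE.
Qed.

End derive_lemmas.

Section real_lemmas.
Context {R : realType}.

Lemma is_derive_le0_nonincr (f D : R -> R) (a x y : R) :
  (forall s, a <= s -> is_derive s 1 f (D s)) -> (forall s, a <= s -> D s <= 0) ->
  a <= x -> x <= y -> f y <= f x.
Proof.
move=> df D0; have df1 s : a <= s -> derivable f s 1 by move/df => [].
apply: ler0_derive1_nincry.
- by move=> s; rewrite in_itv andbT => /ltW; exact: df1.
- move=> s; rewrite in_itv andbT => /ltW hs; rewrite derive1E.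
  by have [_ ->] := df s hs; exact: D0.
- by apply: derivable_within_continuous => s; rewrite in_itv andbT; exact: df1.
Qed.

Lemma Rintegral_lin (c a b : R) : a < b ->
  \int[lebesgue_measure]_(s in `[a, b]) (c * (s - b)) = - (c / 2 * (a - b) ^+ 2).
Proof.
move=> ab; pose F s := c / 2 * (s - b) ^+ 2.
have dlin (s : R) : is_derive s 1 (fun u : R => u - b) 1.
  by have := is_deriveB (is_derive_id s 1) (is_derive_cst b s 1); rewrite subr0.
have dF (s : R) : is_derive s 1 F (c * (s - b)).
  have := is_deriveZ (c / 2) (is_deriveX 2 (dlin s)).
  by move/is_derive_eq; apply; rewrite expr1 /GRing.scale /= mulr1; field.
have F'cont (s : R) : {for s, continuous F}.
  by apply: differentiable_continuous; apply/derivable1_diffP; case: (dF s).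
rewrite /Rintegral (@continuous_FTC2 _ _ F) //= /F ?subrr ?expr0n ?mulr0 ?sub0r //.
- apply: derivable_within_continuous => s _.
  by have [] := is_deriveZ c (dlin s).
- split; first by move=> s _; case: (dF s).
  + exact/cvg_at_right_filter/F'cont.
  + exact/cvg_at_left_filter/F'cont.
- by move=> s _; rewrite derive1E; case: (dF s).
Qed.

End real_lemmas.

Section pair_sums.
Context {R : numDomainType}.

Lemma sum_offdiag_sym {N} (F : 'I_N -> 'I_N -> R) : (forall i j, F i j = F j i) ->
  \sum_(i < N) \sum_(j < N | j != i) F i j =
  2 * \sum_(i < N) \sum_(j < N | (i < j)%N) F i j.
Proof.
move=> Fsym; have split_offdiag i : \sum_(j < N | j != i) F i j =
    \sum_(j < N | (i < j)%N) F i j + \sum_(j < N | (j < i)%N) F i j.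
  rewrite (bigID (fun j : 'I_N => (i < j)%N)) /=.
  by congr (_ + _); apply: eq_bigl => j; rewrite -val_eqE eq_sym /=; case: ltngtP.
rewrite (eq_bigr _ (fun i _ => split_offdiag i)) big_split /= mulr2n mulrDl mul1r.
congr (_ + _); rewrite (exchange_big_dep xpredT) //=.
by apply: eq_bigr => i _; apply: eq_bigr => j _; rewrite Fsym.
Qed.

(* The general [predType] lets this apply to [n_unsafe], which counts a
   classical set. *)
Lemma card_mulr_le_sum_upper {N} (F : 'I_N -> 'I_N -> R)
    (pT : predType ('I_N * 'I_N)) (A : pT) c :
  (forall i j, 0 <= F i j) ->
  (forall ij, ij \in A -> (ij.1 < ij.2)%N /\ c <= F ij.1 ij.2) ->
  c *+ #|A| <= \sum_(i < N) \sum_(j < N | (i < j)%N) F i j.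
Proof.
move=> F0 hA; have -> : #|A| = #|[pred ij | ij \in A]| by rewrite !card.unlock.
rewrite -sumr_const pair_big_dep /= big_mkcond [leRHS]big_mkcond /=.
by apply: ler_sum => ij _; case: ifP => [/hA[-> //]|_]; case: ifP.
Qed.

End pair_sums.

Section plane.
Context {R : realType}.
Implicit Types (x y z : 'rV[R]_2) (t : R).

Lemma dotvC x y : dotv x y = dotv y x.
Proof. by apply: eq_bigr => k _; rewrite mulrC. Qed.

Lemma dotvDl x y z : dotv (x + y) z = dotv x z + dotv y z.
Proof. by rewrite /dotv -big_split; apply: eq_bigr => k _; rewrite mxE mulrDl. Qed.

Lemma dotvNl x z : dotv (- x) z = - dotv x z.
Proof. by rewrite /dotv -sumrN; apply: eq_bigr => k _; rewrite mxE mulNr. Qed.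

Lemma dotvBl x y z : dotv (x - y) z = dotv x z - dotv y z.
Proof. by rewrite dotvDl dotvNl. Qed.

Lemma dotvBr x y z : dotv z (x - y) = dotv z x - dotv z y.
Proof. by rewrite dotvC dotvBl !(dotvC z). Qed.

Lemma dotvZl a x z : dotv (a *: x) z = a * dotv x z.
Proof. by rewrite /dotv mulr_sumr; apply: eq_bigr => k _; rewrite mxE mulrA. Qed.

Lemma dotv_suml (I : Type) (r : seq I) (P : pred I) (F : I -> 'rV[R]_2) z :
  dotv (\sum_(i <- r | P i) F i) z = \sum_(i <- r | P i) dotv (F i) z.
Proof.
elim: r => [|i r IH]; last by rewrite !big_cons; case: (P i); rewrite ?dotvDl IH.
by rewrite !big_nil /dotv; apply: big1 => k _; rewrite mxE mul0r.
Qed.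

Lemma dotv_ge0 x : 0 <= dotv x x.
Proof. by apply: sumr_ge0 => k _; rewrite -expr2 sqr_ge0. Qed.

Lemma enormN x : enorm (- x) = enorm x.
Proof. by rewrite /enorm dotvNl dotvC dotvNl opprK. Qed.

Lemma enorm_ge0 x : 0 <= enorm x.
Proof. exact: sqrtr_ge0. Qed.

Lemma is_derive_dotv {g : R -> 'rV[R]_2} {t w} :
  is_derive t 1 g w -> is_derive t 1 (fun s => dotv (g s) (g s)) (2 * dotv (g t) w).
Proof.
move=> dg; have dgk k : is_derive t 1 (fun s => g s 0 k) (w 0 k).
  exact: is_derive_mx_coef.
have := is_derive_big (index_enum 'I_2) xpredT (fun k s => g s 0 k * g s 0 k) _ t 1
  (fun k _ => is_deriveM (dgk k) (dgk k)).
move/is_derive_eq; apply; rewrite mulr_sumr; apply: eq_bigr => k _.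
by rewrite /GRing.scale /=; ring.
Qed.

Lemma is_derive_comp_grad {f : 'rV[R]_2 -> R} {g : R -> 'rV[R]_2} {t w} :
  differentiable f (g t) -> is_derive t 1 g w ->
  is_derive t 1 (f \o g) (dotv (grad f (g t)) w).
Proof.
move=> df dg; have dgt : differentiable g t by apply/derivable1_diffP; case: dg.
have dfg : differentiable (f \o g) t by exact: differentiable_comp.
apply: DeriveDef; first exact: diff_derivable.
rewrite (deriveE _ dfg) diff_comp //=.
have -> : 'd g t 1 = w by rewrite -deriveE // derive_val.
rewrite [in LHS](row_sum_delta w) linear_sum /dotv.
by apply: eq_bigr => k _; rewrite linearZ /= mxE -deriveE // mulrC.
Qed.

Lemma grad_even (f : 'rV[R]_2 -> R) x :
  (forall y, f (- y) = f y) -> differentiable f x -> grad f (- x) = - grad f x.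
Proof.
move=> fN df; apply/rowP => k; rewrite !mxE.
have -> : 'D_(delta_mx 0 k) f (- x) = 'D_(- delta_mx 0 k) f x.
  rewrite /derive; suff -> :
    (fun h => h^-1 *: ((f \o shift (- x)) (h *: delta_mx 0 k) - f (- x))) =
    (fun h => h^-1 *: ((f \o shift x) (h *: - delta_mx 0 k) - f x)) by [].
  by apply/funext => h /=; rewrite -fN opprD opprK fN -scalerN.
by rewrite !deriveE // linearN.
Qed.

Lemma sum_offdiag_antisym {N} (G : 'I_N -> 'I_N -> 'rV[R]_2) (w : 'I_N -> 'rV[R]_2) :
  (forall i j, j != i -> G j i = - G i j) ->
  \sum_(i < N) \sum_(j < N | j != i) dotv (G i j) (w j) =
  - \sum_(i < N) \sum_(j < N | j != i) dotv (G i j) (w i).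
Proof.
move=> GN; under eq_bigr => i _ do rewrite big_mkcond.
rewrite exchange_big /= -sumrN; apply: eq_bigr => j _.
rewrite [in RHS]big_mkcond -sumrN; apply: eq_bigr => i _ /=.
by rewrite eq_sym; case: eqP => [_|/eqP ij]; rewrite ?oppr0 // GN // dotvNl.
Qed.

End plane.

Section energy.
Context {R : realType}.
Variables (aI ah rd av : R) (O : set 'rV[R]_2).
Implicit Types (x : 'rV[R]_2) (t : R).

Lemma VIN x : VI aI rd (- x) = VI aI rd x.
Proof. by rewrite /VI enormN. Qed.

Lemma VI_ge0 x : 0 < aI -> 0 <= VI aI rd x.
Proof.
by move=> aI0; rewrite /VI; case: ifP => // _; apply: mulr_ge0; [|exact: sqr_ge0];
  rewrite divr_ge0 // ltW.
Qed.

Lemma Vh_ge0 x : 0 < ah -> 0 <= Vh O ah rd x.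
Proof.
by move=> ah0; rewrite /Vh; case: ifP => // _; apply: mulr_ge0; [|exact: sqr_ge0];
  rewrite divr_ge0 // ltW.
Qed.

Lemma is_derive_Phi {N} (p v : 'I_N -> R -> 'rV[R]_2) t :
  (forall i, differentiable (Vh O ah rd) (p i t)) ->
  (forall i j, j != i -> differentiable (VI aI rd) (p i t - p j t)) ->
  (forall i, is_derive t 1 (p i) (v i t)) ->
  (forall i, is_derive t 1 (v i)
     (- (\sum_(j < N | j != i) grad (VI aI rd) (p i t - p j t))
      - grad (Vh O ah rd) (p i t) - av *: v i t)) ->
  is_derive t 1 (Phi O aI ah rd p v) (- av * \sum_(i < N) dotv (v i t) (v i t)).
Proof.
move=> dVh dVI dp dv.
set G := fun i j => grad (VI aI rd) (p i t - p j t).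
set H := fun i => grad (Vh O ah rd) (p i t).
have dpij i j : is_derive t 1 (fun s => p i s - p j s) (v i t - v j t).
  exact: is_deriveB.
have dterm i : is_derive t 1
   (fun s => dotv (v i s) (v i s) + \sum_(j < N | j != i) VI aI rd (p i s - p j s)
       + 2 * Vh O ah rd (p i s))
   (2 * dotv (v i t) (- (\sum_(j < N | j != i) G i j) - H i - av *: v i t)
       + \sum_(j < N | j != i) dotv (G i j) (v i t - v j t)
       + 2 * dotv (H i) (v i t)).
  have dVIi := is_derive_big (index_enum 'I_N) (fun j => j != i)
    (fun j s => VI aI rd (p i s - p j s)) _ t 1
    (fun j ji => is_derive_comp_grad (dVI i j ji) (dpij i j)).
  have dVhi := is_deriveZ 2 (is_derive_comp_grad (dVh i) (dp i)).
  exact: (is_deriveD (is_deriveD (is_derive_dotv (dv i)) dVIi) dVhi).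
have := is_deriveZ 2^-1 (is_derive_big (index_enum 'I_N) xpredT _ _ t 1
  (fun i _ => dterm i)).
move/is_derive_eq; apply.
have GN i j : j != i -> G j i = - G i j.
  by move=> ji; rewrite /G -opprB grad_even //; [exact: VIN | exact: dVI].
set A := \sum_(i < N) \sum_(j < N | j != i) dotv (G i j) (v i t).
have kinetic : \sum_(i < N) dotv (v i t) (- (\sum_(j < N | j != i) G i j) - H i - av *: v i t)
    = - A - \sum_(i < N) dotv (H i) (v i t) - av * \sum_(i < N) dotv (v i t) (v i t).
  rewrite /A mulr_sumr -sumrN -!sumrB; apply: eq_bigr => i _.
  by rewrite dotvC !dotvBl dotvNl dotv_suml dotvZl.
have interaction :
    \sum_(i < N) \sum_(j < N | j != i) dotv (G i j) (v i t - v j t) = 2 * A.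
  under eq_bigr => i _ do rewrite (eq_bigr _ (fun j _ => dotvBr _ _ _)) sumrB.
  rewrite sumrB sum_offdiag_antisym // opprK -/A; ring.
rewrite !big_split /= -!mulr_sumr kinetic interaction /GRing.scale /=.
by field.
Qed.

Lemma oint_fI (cr : R) : 0 <= cr ->
  oint rd cr (fI aI rd) = if cr < rd then aI / 2 * (cr - rd) ^+ 2 else 0.
Proof.
move=> cr0; rewrite /oint leNgt; case: ltP => [crrd|rdcr] /=.
  have -> : \int[lebesgue_measure]_(s in `[cr, rd]) fI aI rd s =
            \int[lebesgue_measure]_(s in `[cr, rd]) (aI * (s - rd)).
    apply: eq_Rintegral => s; rewrite inE /= in_itv /= => /andP[crs srd].
    rewrite /fI (le_trans cr0 crs) /=; case: ltP => // rds.
    by rewrite (@le_anti _ _ s rd) ?srd ?rds // subrr mulr0.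
  by rewrite Rintegral_lin ?opprK.
have -> : \int[lebesgue_measure]_(s in `[rd, cr]) fI aI rd s =
          \int[lebesgue_measure]_(s in `[rd, cr]) (0 : R).
  apply: eq_Rintegral => s; rewrite inE /= in_itv /= => /andP[rds _].
  by rewrite /fI ltNge rds andbF.
by rewrite Rintegral_cst ?mul0r.
Qed.

Lemma oint_fI_le_VI (cr : R) x : 0 < aI -> 0 <= cr -> enorm x <= cr ->
  oint rd cr (fI aI rd) <= VI aI rd x.
Proof.
move=> aI0 cr0 xcr; rewrite oint_fI // /VI.
case: ltP => [crrd|_]; last exact: VI_ge0.
rewrite (le_lt_trans xcr crrd); apply: ler_wpM2l; first by rewrite divr_ge0 ?ltW.
by have := enorm_ge0 x; nra.
Qed.

Definition pair_potential {N} (p : 'I_N -> R -> 'rV[R]_2) t : R :=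
  \sum_(i < N) \sum_(j < N | (i < j)%N) VI aI rd (p i t - p j t).

Lemma pair_potential_ge0 {N} (p : 'I_N -> R -> 'rV[R]_2) t :
  0 < aI -> 0 <= pair_potential p t.
Proof. by move=> aI0; do 2!apply: sumr_ge0 => ? _; exact: VI_ge0. Qed.

Lemma pair_potential_le_Phi {N} (p v : 'I_N -> R -> 'rV[R]_2) t : 0 < ah ->
  pair_potential p t <= Phi O aI ah rd p v t.
Proof.
move=> ah0; have -> : pair_potential p t =
    2^-1 * \sum_(i < N) \sum_(j < N | j != i) VI aI rd (p i t - p j t).
  rewrite sum_offdiag_sym => [|i j]; last by rewrite -VIN opprB.
  by rewrite mulrA mulVf ?mul1r.
rewrite /Phi ler_wpM2l ?invr_ge0 //; apply: ler_sum => i _.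
by rewrite -addrA addrCA lerDl addr_ge0 ?dotv_ge0 ?mulr_ge0 ?Vh_ge0.
Qed.

Lemma unsafe_le_pair_potential {N} (p : 'I_N -> R -> 'rV[R]_2) cr t :
  0 < aI -> 0 <= cr -> oint rd cr (fI aI rd) *+ n_unsafe cr p t <= pair_potential p t.
Proof.
move=> aI0 cr0.
apply: (card_mulr_le_sum_upper (fun i j : 'I_N => VI aI rd (p i t - p j t))) => [i j|ij].
  exact: VI_ge0.
by rewrite inE => /andP[lt_ij unsafe_ij]; split => //; exact: oint_fI_le_VI.
Qed.

End energy.

Theorem proposition4 (R : realType) (O : set 'rV[R]_2) (rd aI ah av cr : R)
  (N k : nat) (p v : 'I_N -> R -> 'rV[R]_2) :
  compact_domain O -> 0 < rd -> 0 < aI -> 0 < ah -> 0 < av -> 0 < cr ->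
  (* the control law is well defined along the trajectory *)
  (forall t : R, 0 <= t -> forall i : 'I_N, differentiable (Vh O ah rd) (p i t)) ->
  (forall t : R, 0 <= t -> forall i j : 'I_N, j != i ->
     differentiable (VI aI rd) (p i t - p j t)) ->
  (* dynamics: pdot_i = v_i, vdot_i = u_i *)
  (forall t : R, 0 <= t -> forall i : 'I_N, is_derive t 1 (p i) (v i t)) ->
  (forall t : R, 0 <= t -> forall i : 'I_N, is_derive t 1 (v i)
     (- (\sum_(j < N | j != i) grad (VI aI rd) (p i t - p j t))
      - grad (Vh O ah rd) (p i t) - av *: v i t)) ->
  Phi O aI ah rd p v 0 < (k.+1)%:R * oint rd cr (fI aI rd) ->
  forall t : R, 0 <= t -> (n_unsafe cr p t <= k)%N.
Proof.
move=> _ _ aI0 ah0 av0 cr0 dVh dVI dp dv Phi0_lt t t0.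
have Phi_dec : Phi O aI ah rd p v t <= Phi O aI ah rd p v 0.
  apply: (@is_derive_le0_nonincr _ _
    (fun s => - av * \sum_(i < N) dotv (v i s) (v i s)) 0) => //.
  - by move=> s s0; apply: is_derive_Phi; [exact: dVh|exact: dVI|exact: dp|exact: dv].
  - move=> s _; rewrite mulNr oppr_le0; apply: mulr_ge0; first exact: ltW.
    by apply: sumr_ge0 => i _; exact: dotv_ge0.
have Phi0_ge0 := le_trans (pair_potential_ge0 aI rd p 0 aI0)
  (pair_potential_le_Phi aI ah rd O p v 0 ah0).
have unsafe_le := le_trans (unsafe_le_pair_potential aI rd p cr t aI0 (ltW cr0))
  (le_trans (pair_potential_le_Phi aI ah rd O p v t ah0) Phi_dec).
rewrite leqNgt; apply/negP => k_lt.
have [c_le0|c_gt0] := lerP (oint rd cr (fI aI rd)) 0.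
  by move: (le_lt_trans Phi0_ge0 Phi0_lt); rewrite ltNge mulr_ge0_le0.
move: (le_lt_trans unsafe_le Phi0_lt); rewrite mulr_natl ltr_pMn2l //.
by rewrite ltnS leqNgt k_lt.
Qed.
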